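(* Let $p_1,p_2,\dots$ be integers $\ge 2$ and let $H_k=\wr_{i=1}^{k}C_{p_i}$, realized as the group of automorphisms of the first $k$ levels of the spherically homogeneous rooted tree with branching numbers $p_1,p_2,\dots$ whose vertex permutation at every vertex of level $i-1$ is a power of the cyclic shift on $p_i$ letters. Let $f_{k,k+1}:H_k\to H_{k+1}$ be the injective homomorphism extending an automorphism by trivial vertex permutations at level $k$ (i.e. $g\mapsto g(e,\dots,e)$), and $f_{k,j}$ the compositions. Then the direct limit $\varinjlim H_k$ of this direct system has commutator width $1$.
   Context: The commutator width $cw(G)$ of a group $G$ is the least $n$ such that every element of $G'$ is a product of at most $n$ commutators. *)

From mathcomp Require Import all_boot.
Set Implicit Arguments. Unset Strict Implicit. Unset Printing Implicit Defensive.

(* Branching numbers: level i (i >= 1) of the tree has branching p i, i.e. a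
   vertex at depth d (a word of length d) has children indexed by 0..p d.+1 - 1.
   p 0 is unused. *)
Definition is_vertex (p : nat -> nat) (v : seq nat) : bool :=
  all (fun i => nth 0 v i < p i.+1) (iota 0 (size v)).

(* An automorphism whose vertex permutations are powers of the cyclic shift is
   given by its portrait a : vertex -> exponent of the shift (mod p). *)
Definition portrait (p : nat -> nat) (a : seq nat -> nat) : Prop :=
  forall v, if is_vertex p v then a v < p (size v).+1 else a v == 0.

Definition act (p : nat -> nat) (a : seq nat -> nat) (v : seq nat) : seq nat :=
  mkseq (fun i => (nth 0 v i + a (take i v)) %% p i.+1) (size v).

Definition act_inv (p : nat -> nat) (a : seq nat -> nat) (v : seq nat) : seq nat :=
  foldl (fun y i => rcons y ((nth 0 v i + (p i.+1 - a y)) %% p i.+1))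
        [::] (iota 0 (size v)).

(* Group operations on portraits: mul a b is the portrait of the composite
   "first b, then a"; one is the identity; inv a the inverse. *)
Definition one : seq nat -> nat := fun _ => 0.

Definition mul (p : nat -> nat) (a b : seq nat -> nat) : seq nat -> nat :=
  fun v => if is_vertex p v then (b v + a (act p b v)) %% p (size v).+1 else 0.

Definition inv (p : nat -> nat) (a : seq nat -> nat) : seq nat -> nat :=
  fun v => if is_vertex p v
           then (p (size v).+1 - a (act_inv p a v)) %% p (size v).+1 else 0.

(* H_k = iterated wreath product of C_{p_1},...,C_{p_k}: automorphisms of the
   first k levels, i.e. portraits whose labels vanish at depth >= k.
   f_{k,k+1} extends by trivial vertex permutations at level k, i.e. it is the
   inclusion H_k <= H_{k+1} in this model; hence the direct limit of the system
   (H_k, f_{k,j}) is the union of the H_k. *)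
Definition in_H (p : nat -> nat) (k : nat) (a : seq nat -> nat) : Prop :=
  portrait p a /\ forall v, k <= size v -> a v = 0.

Definition in_lim (p : nat -> nat) (a : seq nat -> nat) : Prop :=
  exists k, in_H p k a.

Definition comm (p : nat -> nat) (a b : seq nat -> nat) : seq nat -> nat :=
  mul p (mul p (inv p a) (inv p b)) (mul p a b).

Definition is_commutator (p : nat -> nat) (g : seq nat -> nat) : Prop :=
  exists a b, [/\ in_lim p a, in_lim p b & g = comm p a b].

Definition prod_list (p : nat -> nat) (l : seq (seq nat -> nat)) : seq nat -> nat :=
  foldr (mul p) one l.

Definition all_commutators (p : nat -> nat) (l : seq (seq nat -> nat)) : Prop :=
  forall i, i < size l -> is_commutator p (nth one l i).

Definition in_derived (p : nat -> nat) (g : seq nat -> nat) : Prop :=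
  exists l, all_commutators p l /\ g = prod_list p l.

Definition cw_le (p : nat -> nat) (n : nat) : Prop :=
  forall g, in_derived p g ->
    exists l, [/\ size l <= n, all_commutators p l & g = prod_list p l].

Definition commutator_width_is (p : nat -> nat) (n : nat) : Prop :=
  cw_le p n /\ forall m, m < n -> ~ cw_le p m.

From Pilot Require Import Defs.
From mathcomp Require Import all_boot.
From Stdlib Require Import FunctionalExtensionality.
Import Defs.
Set Implicit Arguments. Unset Strict Implicit. Unset Printing Implicit Defensive.

(* Summing the labels at depth j
   modulo p_(j+1) is a homomorphism from G onto C_(p_(j+1)), so all level sums
   of an element of G' vanish. Conversely, an element g of H_k whose level sums
   vanish is a single commutator of elements of H_k, by induction on k: its
   root label is 0, and the ordered product g_0 ... g_(p_1 - 1) of its sections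
   again has vanishing level sums, hence equals [c, d] by induction. Then
   g = [a, b], where b is the rooted p_1-cycle carrying d below its last child
   and a has root label 0 and sections c g_0 ... g_(x-1). Finally G' <> 1:
   if s is the rooted cycle and e the generator of C_(p_2) placed below the
   child 0, the section of [e, s] at the child 0 is the inverse generator. *)

Definition shift (p : nat -> nat) : nat -> nat := fun i => p i.+1.

Definition sec (a : seq nat -> nat) (x : nat) : seq nat -> nat := fun w => a (x :: w).

Definition glue (p : nat -> nat) (c : nat) (F : nat -> seq nat -> nat) : seq nat -> nat :=
  fun v => if v is x :: w then (if x < p 1 then F x w else 0) else c.

Lemma sec_glue p c F x : x < p 1 -> sec (glue p c F) x = F x.
Proof. by move=> hx; apply: functional_extensionality => w; rewrite /sec /= hx. Qed.

Lemma is_vertex_cons p x w :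
  is_vertex p (x :: w) = (x < p 1) && is_vertex (shift p) w.
Proof. by rewrite /is_vertex /= -[1]addn0 iotaDl all_map. Qed.

Lemma act_cons p a x w :
  act p a (x :: w) = (x + a [::]) %% p 1 :: act (shift p) (sec a x) w.
Proof. by rewrite /act /mkseq /= -[1]addn0 iotaDl -map_comp. Qed.

Lemma act_inv_cons p a x w :
  let y := (x + (p 1 - a [::])) %% p 1 in
  act_inv p a (x :: w) = y :: act_inv (shift p) (sec a y) w.
Proof.
move=> y; rewrite /act_inv /=.
have shift_iota n m z :
  foldl (fun y' i => rcons y' ((nth 0 (x :: w) i + (p i.+1 - a y')) %% p i.+1))
        (y :: z) (iota m.+1 n) =
  y :: foldl (fun y' i => rcons y' ((nth 0 w i + (shift p i.+1 - sec a y y')) %% shift p i.+1))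
        z (iota m n).
  by elim: n m z => [//|n IH] m z /=; apply: IH.
exact: shift_iota.
Qed.

Lemma size_act p a v : size (act p a v) = size v.
Proof. exact: size_mkseq. Qed.

Lemma size_act_inv p a v : size (act_inv p a v) = size v.
Proof.
rewrite /act_inv.
have size_foldl n m y :
  size (foldl (fun y i => rcons y ((nth 0 v i + (p i.+1 - a y)) %% p i.+1)) y (iota m n))
  = size y + n.
  by elim: n m y => [|n IH] m y /=; rewrite ?addn0 // IH size_rcons addSnnS.
exact: size_foldl.
Qed.

Lemma mul_nil p a b : mul p a b [::] = (b [::] + a [::]) %% p 1.
Proof. by []. Qed.

Lemma inv_nil p a : inv p a [::] = (p 1 - a [::]) %% p 1.
Proof. by []. Qed.

Lemma mul_out p a b x w : p 1 <= x -> mul p a b (x :: w) = 0.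
Proof. by move=> hx; rewrite /mul is_vertex_cons ltnNge hx. Qed.

Lemma sec_mul p a b x : x < p 1 ->
  sec (mul p a b) x = mul (shift p) (sec a ((x + b [::]) %% p 1)) (sec b x).
Proof.
move=> hx; apply: functional_extensionality => w.
by rewrite /sec /mul is_vertex_cons hx act_cons.
Qed.

Lemma sec_inv p a x : x < p 1 ->
  sec (inv p a) x = inv (shift p) (sec a ((x + (p 1 - a [::])) %% p 1)).
Proof.
move=> hx; apply: functional_extensionality => w.
by rewrite /sec /inv is_vertex_cons hx act_inv_cons.
Qed.

Lemma portrait_root p a : portrait p a -> a [::] < p 1.
Proof. by move=> Ha; have := Ha [::]. Qed.

Lemma portrait_out p a x w : portrait p a -> p 1 <= x -> a (x :: w) = 0.
Proof. by move=> Ha hx; have := Ha (x :: w); rewrite is_vertex_cons ltnNge hx => /eqP. Qed.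

Lemma portrait_eq p a b : portrait p a -> portrait p b -> a [::] = b [::] ->
  (forall x, x < p 1 -> sec a x = sec b x) -> a = b.
Proof.
move=> Ha Hb ab0 Eab; apply: functional_extensionality => -[//|x w].
have [hx|hx] := ltnP x (p 1); last by rewrite (portrait_out w Ha hx) (portrait_out w Hb hx).
by have := congr1 (fun f => f w) (Eab x hx).
Qed.

Lemma shift_gt0 p : (forall i, 0 < p i.+1) -> forall i, 0 < shift p i.+1.
Proof. by move=> p_gt0 i; apply: p_gt0. Qed.

Lemma portrait_one p : (forall i, 0 < p i.+1) -> portrait p one.
Proof. by move=> p_gt0 v; case: ifP. Qed.

Lemma portrait_mul p a b : (forall i, 0 < p i.+1) -> portrait p (mul p a b).
Proof. by move=> p_gt0 v; rewrite /mul; case: (is_vertex p v) => //; apply: ltn_pmod. Qed.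

Lemma portrait_inv p a : (forall i, 0 < p i.+1) -> portrait p (inv p a).
Proof. by move=> p_gt0 v; rewrite /inv; case: (is_vertex p v) => //; apply: ltn_pmod. Qed.

Lemma portrait_sec p a x : (forall i, 0 < p i.+1) -> portrait p a ->
  portrait (shift p) (sec a x).
Proof.
move=> p_gt0 Ha w; have [hx|hx] := ltnP x (p 1).
  by have := Ha (x :: w); rewrite is_vertex_cons hx.
by rewrite /sec (portrait_out w Ha hx); case: ifP => // _; apply: p_gt0.
Qed.

Lemma mulA p a b c : mul p (mul p a b) c = mul p a (mul p b c).
Proof.
apply: functional_extensionality => v.
elim: v p a b c => [|x w IH] p a b c.
  by rewrite !mul_nil modnDml modnDmr addnA.
have [hx|hx] := ltnP x (p 1); last by rewrite !mul_out.
have p1_gt0 : 0 < p 1 by apply: leq_ltn_trans hx.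
rewrite -![mul p _ _ (x :: w)]/(sec _ x w) !sec_mul ?ltn_pmod //.
by rewrite IH mul_nil modnDml modnDmr addnA.
Qed.

Lemma mul1g p a : (forall i, 0 < p i.+1) -> portrait p a -> mul p one a = a.
Proof.
move=> p_gt0 Ha; apply: functional_extensionality => v.
elim: v p a p_gt0 Ha => [|x w IH] p a p_gt0 Ha.
  by rewrite mul_nil addn0 modn_small // portrait_root.
have [hx|hx] := ltnP x (p 1); last by rewrite mul_out // (portrait_out w Ha hx).
rewrite -[mul p _ _ _]/(sec _ x w) sec_mul // IH //.
  exact: shift_gt0.
exact: portrait_sec.
Qed.

Lemma mulg1 p a : (forall i, 0 < p i.+1) -> portrait p a -> mul p a one = a.
Proof.
move=> p_gt0 Ha; apply: functional_extensionality => v.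
elim: v p a p_gt0 Ha => [|x w IH] p a p_gt0 Ha.
  by rewrite mul_nil modn_small // portrait_root.
have [hx|hx] := ltnP x (p 1); last by rewrite mul_out // (portrait_out w Ha hx).
rewrite -[mul p _ _ _]/(sec _ x w) sec_mul // addn0 modn_small // IH //.
  exact: shift_gt0.
exact: portrait_sec.
Qed.

Lemma mulVg p a : (forall i, 0 < p i.+1) -> portrait p a -> mul p (inv p a) a = one.
Proof.
move=> p_gt0 Ha; apply: functional_extensionality => v.
elim: v p a p_gt0 Ha => [|x w IH] p a p_gt0 Ha.
  by rewrite mul_nil inv_nil modnDmr subnKC ?modnn // ltnW // portrait_root.
have [hx|hx] := ltnP x (p 1); last by rewrite mul_out.
have a0_lt := portrait_root Ha.
rewrite -[mul p _ _ _]/(sec _ x w) sec_mul // sec_inv ?ltn_pmod //.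
rewrite modnDml -addnA subnKC ?modnDr ?modn_small //; last exact: ltnW.
rewrite IH //.
  exact: shift_gt0.
exact: portrait_sec.
Qed.

Lemma mulgV p a : (forall i, 0 < p i.+1) -> portrait p a -> mul p a (inv p a) = one.
Proof.
move=> p_gt0 Ha; apply: functional_extensionality => v.
elim: v p a p_gt0 Ha => [|x w IH] p a p_gt0 Ha.
  by rewrite mul_nil inv_nil modnDml subnK ?modnn // ltnW // portrait_root.
have [hx|hx] := ltnP x (p 1); last by rewrite mul_out.
rewrite -[mul p _ _ _]/(sec _ x w) sec_mul // sec_inv // inv_nil modnDmr.
rewrite IH //.
  exact: shift_gt0.
exact: portrait_sec.
Qed.

Section GroupLaws.

Variable p : nat -> nat.
Hypothesis p_gt0 : forall i, 0 < p i.+1.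

Lemma inv_uniq c d : portrait p c -> portrait p d -> mul p c d = one -> c = inv p d.
Proof.
move=> Hc Hd cd1.
rewrite -(mulg1 p_gt0 Hc) -(mulgV p_gt0 Hd) -mulA cd1 mul1g //.
exact: portrait_inv.
Qed.

Lemma invM a b : portrait p a -> portrait p b ->
  inv p (mul p a b) = mul p (inv p b) (inv p a).
Proof.
move=> Ha Hb; symmetry; apply: inv_uniq; [exact: portrait_mul.. |].
by rewrite mulA -(mulA _ (inv p a)) mulVg // mul1g // mulVg.
Qed.

Lemma inv_one : inv p one = one.
Proof. by symmetry; apply: inv_uniq; rewrite ?mul1g //; exact: portrait_one. Qed.

Lemma mulKg a b : portrait p a -> portrait p b -> mul p (inv p a) (mul p a b) = b.
Proof. by move=> Ha Hb; rewrite -mulA mulVg // mul1g. Qed.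

Lemma comm11 : comm p one one = one.
Proof. by rewrite /comm inv_one !mul1g //; exact: portrait_one. Qed.

Lemma portrait_prod_list l : portrait p (prod_list p l).
Proof. by case: l => [|a l] /=; [exact: portrait_one | exact: portrait_mul]. Qed.

Lemma prod_list1 a : portrait p a -> prod_list p [:: a] = a.
Proof. exact: mulg1. Qed.

Lemma prod_list_rcons l a : portrait p a ->
  prod_list p (rcons l a) = mul p (prod_list p l) a.
Proof.
move=> Ha; elim: l => [|b l IH] /=; first by rewrite mulg1 // mul1g.
by rewrite IH mulA.
Qed.

End GroupLaws.

Section Levels.

Variable p : nat -> nat.
Hypothesis p_gt0 : forall i, 0 < p i.+1.

Lemma in_H_one k : in_H p k one.
Proof. by split; [exact: portrait_one|]. Qed.

Lemma in_H_mul k a b : in_H p k a -> in_H p k b -> in_H p k (mul p a b).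
Proof.
move=> [Ha Za] [Hb Zb]; split; first exact: portrait_mul.
by move=> v hv; rewrite /mul Zb // Za ?size_act // mod0n; case: ifP.
Qed.

Lemma in_H_inv k a : in_H p k a -> in_H p k (inv p a).
Proof.
move=> [Ha Za]; split; first exact: portrait_inv.
by move=> v hv; rewrite /inv Za ?size_act_inv // subn0 modnn; case: ifP.
Qed.

Lemma in_H_mono k k' a : k <= k' -> in_H p k a -> in_H p k' a.
Proof. by move=> le_kk' [Ha Za]; split=> // v hv; apply: Za; exact: leq_trans hv. Qed.

Lemma in_H0 a : in_H p 0 a -> a = one.
Proof. by move=> [_ Za]; apply: functional_extensionality => v; exact: Za. Qed.

Lemma in_H_sec k a x : in_H p k.+1 a -> in_H (shift p) k (sec a x).
Proof. by move=> [Ha Za]; split=> [|w hw]; [exact: portrait_sec | exact: Za]. Qed.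

Lemma portrait_glue c F : c < p 1 ->
  (forall x, x < p 1 -> portrait (shift p) (F x)) -> portrait p (glue p c F).
Proof.
move=> hc HF [|x w] //=; rewrite is_vertex_cons.
by case: ltnP => //= hx; exact: HF.
Qed.

Lemma in_H_glue k c F : c < p 1 ->
  (forall x, x < p 1 -> in_H (shift p) k (F x)) -> in_H p k.+1 (glue p c F).
Proof.
move=> hc HF; split=> [|[|x w] hw //=].
  by apply: portrait_glue => // x hx; case: (HF x hx).
by case: ifP => // hx; apply: (HF x hx).2.
Qed.

Lemma in_lim_mul a b : in_lim p a -> in_lim p b -> in_lim p (mul p a b).
Proof.
move=> [k Ha] [l Hb]; exists (maxn k l).
by apply: in_H_mul; [apply: in_H_mono Ha | apply: in_H_mono Hb]; rewrite ?leq_maxl ?leq_maxr.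
Qed.

Lemma in_lim_inv a : in_lim p a -> in_lim p (inv p a).
Proof. by move=> [k Ha]; exists k; exact: in_H_inv. Qed.

Lemma in_lim_comm a b : in_lim p a -> in_lim p b -> in_lim p (comm p a b).
Proof. by move=> Ha Hb; do !apply: in_lim_mul; try apply: in_lim_inv. Qed.

Lemma in_lim_portrait a : in_lim p a -> portrait p a.
Proof. by case=> k []. Qed.

End Levels.

Fixpoint level_sum (j : nat) (p : nat -> nat) (a : seq nat -> nat) : nat :=
  if j is j'.+1 then \sum_(x < p 1) level_sum j' (shift p) (sec a x) else a [::].

Lemma sum_ord_rot n c (F : nat -> nat) : 0 < n ->
  \sum_(x < n) F ((x + c) %% n) = \sum_(x < n) F x.
Proof.
move=> n_gt0; pose h (x : 'I_n) := Ordinal (ltn_pmod (x + c) n_gt0).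
have h_inj : injective h.
  move=> x y /(congr1 val) /= /eqP; rewrite eqn_modDr !modn_small // => /eqP.
  exact: val_inj.
by rewrite [RHS](reindex_inj h_inj).
Qed.

Lemma root_eq0 p g : portrait p g -> level_sum 0 p g = 0 %[mod p 1] -> g [::] = 0.
Proof. by move=> Hg; rewrite /= mod0n modn_small // portrait_root. Qed.

Lemma level_sum_one j p : level_sum j p one = 0.
Proof. by elim: j p => [//|j IH] p /=; rewrite big1. Qed.

Lemma level_sum_mul j p a b : (forall i, 0 < p i.+1) ->
  level_sum j p (mul p a b) = level_sum j p a + level_sum j p b %[mod p j.+1].
Proof.
elim: j p a b => [|j IH] p a b p_gt0 /=; first by rewrite modn_mod addnC.
rewrite -modn_summ (eq_bigr (fun x : 'I_(p 1) =>
  (level_sum j (shift p) (sec a ((x + b [::]) %% p 1)) +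
   level_sum j (shift p) (sec b x)) %% p j.+2)) => [|x _]; last first.
  by rewrite sec_mul // IH //; exact: shift_gt0.
rewrite modn_summ big_split /=.
by rewrite (sum_ord_rot _ (fun y => level_sum j (shift p) (sec a y)) (p_gt0 0)).
Qed.

Lemma level_sum_prod j p l : (forall i, 0 < p i.+1) ->
  level_sum j p (prod_list p l) = \sum_(a <- l) level_sum j p a %[mod p j.+1].
Proof.
move=> p_gt0; elim: l => [|a l IH] /=; first by rewrite big_nil level_sum_one.
by rewrite level_sum_mul // -modnDmr IH modnDmr big_cons.
Qed.

Lemma level_sum_comm j p a b : (forall i, 0 < p i.+1) ->
  portrait p a -> portrait p b -> level_sum j p (comm p a b) = 0 %[mod p j.+1].
Proof.
move=> p_gt0 Ha Hb.
have level_sum_inv c : portrait p c ->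
    level_sum j p (inv p c) + level_sum j p c = 0 %[mod p j.+1].
  by move=> Hc; rewrite -level_sum_mul // mulVg // level_sum_one.
rewrite /comm level_sum_mul // -modnDm !level_sum_mul // modnDm addnACA.
rewrite -modnDm -[in RHS](modnDm 0 0).
by congr ((_ + _) %% _); apply: level_sum_inv.
Qed.

Lemma all_commutators_cons p c l :
  all_commutators p (c :: l) -> is_commutator p c /\ all_commutators p l.
Proof. by move=> Hl; split=> [|i hi]; [exact: (Hl 0) | exact: (Hl i.+1)]. Qed.

Lemma all_commutators1 p g : is_commutator p g -> all_commutators p [:: g].
Proof. by move=> Hg [|i]. Qed.

Lemma portrait_commutator p g : (forall i, 0 < p i.+1) -> is_commutator p g -> portrait p g.
Proof. by move=> p_gt0 [a [b [_ _ ->]]]; exact: portrait_mul. Qed.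

Lemma in_lim_prod_commutators p l : (forall i, 0 < p i.+1) ->
  all_commutators p l -> in_lim p (prod_list p l).
Proof.
move=> p_gt0; elim: l => [|c l IH] /=; first by exists 0; exact: in_H_one.
case/all_commutators_cons=> [[a [b [Ha Hb ->]]] /IH Hl].
by apply: in_lim_mul => //; exact: in_lim_comm.
Qed.

Lemma level_sum_prod_commutators j p l : (forall i, 0 < p i.+1) ->
  all_commutators p l -> level_sum j p (prod_list p l) = 0 %[mod p j.+1].
Proof.
move=> p_gt0; rewrite level_sum_prod //; elim: l => [|c l IH]; first by rewrite big_nil.
case/all_commutators_cons=> [[a [b [Ha Hb ->]]] /IH Hl].
rewrite big_cons -modnDm Hl.
by rewrite (level_sum_comm _ p_gt0 (in_lim_portrait Ha) (in_lim_portrait Hb)) !mod0n.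
Qed.

Lemma sec_comm_cycle p a b x : 1 < p 1 -> a [::] = 0 -> b [::] = 1 -> x < p 1 ->
  sec (comm p a b) x =
  mul (shift p) (mul (shift p) (inv (shift p) (sec a x)) (inv (shift p) (sec b x)))
      (mul (shift p) (sec a ((x + 1) %% p 1)) (sec b x)).
Proof.
move=> p1_gt1 a0 b0 hx; have p1_gt0 : 0 < p 1 by apply: ltnW.
have p1_pred : p 1 - 1 < p 1 by rewrite subn1 prednK.
have rot_back : ((x + 1) %% p 1 + (p 1 - 1)) %% p 1 = x.
  by rewrite modnDml -addnA subnKC // modnDr modn_small.
rewrite /comm (sec_mul _ _ hx) mul_nil a0 b0 addn0 (modn_small p1_gt1).
rewrite sec_mul ?ltn_pmod // inv_nil b0 (modn_small p1_pred) rot_back.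
rewrite !sec_inv ?ltn_pmod // a0 b0 subn0 modnDr (modn_small hx) rot_back.
by rewrite (sec_mul _ _ hx) b0.
Qed.

Definition sections_prod (p : nat -> nat) (g : seq nat -> nat) (n : nat) :=
  prod_list (shift p) [seq sec g x | x <- iota 0 n].

Lemma sections_prodS p g n : (forall i, 0 < p i.+1) -> portrait p g ->
  sections_prod p g n.+1 = mul (shift p) (sections_prod p g n) (sec g n).
Proof.
move=> p_gt0 Hg; rewrite /sections_prod -addn1 iotaD map_cat /= cats1.
by rewrite prod_list_rcons //; [exact: shift_gt0 | exact: portrait_sec].
Qed.

Lemma in_H_sections_prod k p g n : (forall i, 0 < p i.+1) -> in_H p k.+1 g ->
  in_H (shift p) k (sections_prod p g n).
Proof.
move=> p_gt0 Hg; rewrite /sections_prod; elim: (iota 0 n) => [|x s IH] /=.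
  exact/in_H_one/shift_gt0.
by apply: in_H_mul IH; [exact: shift_gt0 | exact: in_H_sec].
Qed.

Lemma level_sum_sections_prod j p g : (forall i, 0 < p i.+1) ->
  level_sum j (shift p) (sections_prod p g (p 1)) = level_sum j.+1 p g %[mod shift p j.+1].
Proof.
move=> p_gt0; rewrite level_sum_prod ?big_map; last exact: shift_gt0.
by rewrite /= -(big_mkord xpredT (fun x => level_sum j (shift p) (sec g x))) /index_iota subn0.
Qed.

Lemma comm_of_sections_prod p g c d : (forall i, 0 < p i.+1) -> 1 < p 1 ->
  portrait p g -> portrait (shift p) c -> portrait (shift p) d ->
  sections_prod p g (p 1) = comm (shift p) c d ->
  g [::] = 0 ->
  g = comm p (glue p 0 (fun x => mul (shift p) c (sections_prod p g x)))
             (glue p 1 (fun x => if x == (p 1).-1 then d else one)).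
Proof.
move=> p_gt0 p1_gt1 Hg Hc Hd cd_eq g0.
have p1_gt0 : 0 < p 1 by exact: ltnW.
have sp_gt0 := shift_gt0 p_gt0.
have Pgx x : portrait (shift p) (sec g x) by exact: portrait_sec.
have PQ x : portrait (shift p) (sections_prod p g x) by exact: portrait_prod_list.
set a := glue p 0 _; set b := glue p 1 _.
have Pa : portrait p a by apply: portrait_glue => // x _; exact: portrait_mul.
have Pb : portrait p b.
  by apply: portrait_glue => // x _; case: ifP => _ //; exact: portrait_one.
apply: portrait_eq => //; first exact: portrait_mul.
  by rewrite g0; apply/esym/root_eq0; [exact: portrait_mul | exact: level_sum_comm].
move=> x hx; rewrite sec_comm_cycle // /a /b !sec_glue ?ltn_pmod //.
case: (eqVneq x (p 1).-1) => [x_last | x_not_last].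
  have -> : (x + 1) %% p 1 = 0 by rewrite x_last addn1 prednK ?modnn.
  have P_eq : sections_prod p g (p 1) = mul (shift p) (sections_prod p g x) (sec g x).
    by rewrite -sections_prodS // x_last prednK.
  rewrite [sections_prod p g 0]/= mulg1 // invM //.
  rewrite -[sec g x](mulKg sp_gt0 (PQ x) (Pgx x)) -P_eq cd_eq.
  by rewrite /comm !mulA.
have x1_lt : x + 1 < p 1.
  by rewrite addn1 ltn_neqAle hx andbT; apply: contra x_not_last => /eqP <-.
rewrite (modn_small x1_lt) inv_one // !mulg1 //; [|exact: portrait_mul|exact: portrait_inv].
by rewrite addn1 sections_prodS // -(mulA _ c) mulKg //; exact: portrait_mul.
Qed.

Lemma commutator_of_level_sums k p g : (forall i, 1 < p i.+1) -> in_H p k g ->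
  (forall j, level_sum j p g = 0 %[mod p j.+1]) ->
  exists a b, [/\ in_H p k a, in_H p k b & g = comm p a b].
Proof.
elim: k p g => [|k IH] p g p_gt1 Hg level_sums_g;
  have p_gt0 i : 0 < p i.+1 by exact: ltnW.
  by exists one, one; rewrite (in_H0 Hg) comm11 //; split=> //; exact: in_H_one.
have [c [d [Hc Hd cd_eq]]] : exists c d, [/\ in_H (shift p) k c, in_H (shift p) k d &
    sections_prod p g (p 1) = comm (shift p) c d].
  apply: IH => [i | | j]; first exact: p_gt1.
    exact: in_H_sections_prod.
  by rewrite level_sum_sections_prod // level_sums_g.
exists (glue p 0 (fun x => mul (shift p) c (sections_prod p g x))),
       (glue p 1 (fun x => if x == (p 1).-1 then d else one)).
split.
- apply: in_H_glue => // x _; apply: in_H_mul => //; first exact: shift_gt0.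
  exact: in_H_sections_prod.
- by apply: in_H_glue => // x _; case: ifP => _ //; apply/in_H_one/shift_gt0.
apply: (comm_of_sections_prod p_gt0 (p_gt1 0) Hg.1 Hc.1 Hd.1 cd_eq).
exact: root_eq0 Hg.1 (level_sums_g 0).
Qed.

Lemma nontrivial_commutator p : (forall i, 1 < p i.+1) ->
  exists2 g, is_commutator p g & g <> one.
Proof.
move=> p_gt1; have p_gt0 i : 0 < p i.+1 by exact: ltnW.
have sp_gt0 := shift_gt0 p_gt0.
pose e := glue (shift p) 1 (fun _ => one).
pose a := glue p 0 (fun x => if x == 0 then e else one).
pose b := glue p 1 (fun _ => one).
have He : in_H (shift p) 1 e.
  by apply: in_H_glue => // [|x _]; [exact: p_gt1 | exact/in_H_one/shift_gt0].
exists (comm p a b).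
  exists a, b; split=> //; [exists 2 | exists 1]; apply: in_H_glue => // x _.
    by case: ifP => _ //; exact: in_H_one.
  exact: in_H_one.
have Pie : portrait (shift p) (inv (shift p) e) by exact: portrait_inv.
have P1 : portrait (shift p) one by exact: portrait_one.
move/(congr1 (fun f => sec f 0 [::])).
rewrite sec_comm_cycle // add0n (modn_small (p_gt1 0)) !sec_glue //= inv_one // !mulg1 //.
have p2_pred : shift p 1 - 1 < shift p 1 by rewrite subn1 prednK.
rewrite inv_nil /= (modn_small p2_pred).
by move/eqP; rewrite subn_eq0 leqNgt (p_gt1 1).
Qed.

Theorem corollary3 (p : nat -> nat) (hp : forall i, 2 <= p i.+1) :
  commutator_width_is p 1.
Proof.
have p_gt0 i : 0 < p i.+1 by exact: ltnW.
split.
  move=> _ [l [Hl ->]].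
  have [k Hk] := in_lim_prod_commutators p_gt0 Hl.
  have [a [b [Ha Hb ->]]] :=
    commutator_of_level_sums hp Hk (fun j => level_sum_prod_commutators j p_gt0 Hl).
  exists [:: comm p a b]; rewrite prod_list1 //; last exact: portrait_mul.
  by split=> //; apply: all_commutators1; exists a, b; split=> //; exists k.
move=> m; rewrite ltnS leqn0 => /eqP -> cw0.
have [g Hg g_ne1] := nontrivial_commutator hp.
have [|l [l_nil _ g1]] := cw0 g.
  exists [:: g]; rewrite prod_list1 //; last exact: portrait_commutator.
  by split=> //; exact: all_commutators1.
by move: l_nil g1; rewrite leqn0 => /nilP ->; exact: g_ne1.
Qed.
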